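(* Let $\mathcal K$ be a simplicial complex on $[m]$, and let $\mathcal L$ be the simplicial complex on $[m+1]$ given by $$\mathcal L=\{\,I: I\subset[m]\,\}\ \cup\ \{\,I\cup\{m+1\}: I\in\mathcal K\,\}$$ (the union of the full simplex on $[m]$ and the cone over $\mathcal K$ with apex $m+1$). Then there is a homotopy equivalence $U(\mathcal K)\simeq D(\mathcal L)$, where $D(\mathcal L)\subset\mathbb C^{m+1}$. The same holds for real arrangement complements: $U_{\mathbb R}(\mathcal K)\simeq D_{\mathbb R}(\mathcal L)$.
   Context: A simplicial complex on a finite set $V$ is a collection of subsets of $V$ containing $\varnothing$ and closed under taking subsets. For a simplicial complex $\mathcal K$ on $[n]$ and $I=\{i_1,\dots,i_k\}\subset[n]$ let $C_I=\{z\in\mathbb C^n: z_{i_1}=\dots=z_{i_k}=0\}$ and $D_I=\{z\in\mathbb C^n: z_{i_1}=\dots=z_{i_k}\}$; set $U(\mathcal K)=\mathbb C^n\setminus\bigcup_{I\notin\mathcal K}C_I$ and $D(\mathcal K)=\mathbb C^n\setminus\bigcup_{I\notin\mathcal K}D_I$. $U_{\mathbb R}$ and $D_{\mathbb R}$ are defined analogously in $\mathbb R^n$. *)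

From HB Require Import structures.
From mathcomp Require Import all_boot all_algebra.
From mathcomp Require Import all_classical all_reals all_analysis.
From mathcomp.real_closed Require Import complex.
Export numFieldNormedType.Exports.

Set Implicit Arguments.
Unset Strict Implicit.
Unset Printing Implicit Defensive.

Local Open Scope ring_scope.
Local Open Scope classical_set_scope.

Definition simplicial_complex (n : nat) (K : {set {set 'I_n}}) : Prop :=
  (finset.set0 : {set 'I_n}) \in K /\ (forall I J : {set 'I_n}, J \subset I -> I \in K -> J \in K).

Definition coordC (F : numFieldType) (n : nat) (I : {set 'I_n}) : set 'rV[F]_n :=
  [set z | forall i, i \in I -> z ord0 i = 0].

Definition diagD (F : numFieldType) (n : nat) (I : {set 'I_n}) : set 'rV[F]_n :=
  [set z | forall i j, i \in I -> j \in I -> z ord0 i = z ord0 j].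

Definition Ucompl (F : numFieldType) (n : nat) (K : {set {set 'I_n}}) : set 'rV[F]_n :=
  [set z | forall I : {set 'I_n}, I \notin K -> ~ @coordC F n I z].

Definition Dcompl (F : numFieldType) (n : nat) (K : {set {set 'I_n}}) : set 'rV[F]_n :=
  [set z | forall I : {set 'I_n}, I \notin K -> ~ @diagD F n I z].

(* The complex L on [m+1]: all subsets of [m] together with the cone
   {J u {m+1} | J in K}; the apex m+1 is ord_max : 'I_m.+1. *)
Definition cone_complex (m : nat) (K : {set {set 'I_m}}) : {set {set 'I_m.+1}} :=
  finset [pred I : {set 'I_m.+1} | ord_max \notin I] :|:
  ((fun J : {set 'I_m} => ord_max |: (widen_ord (leqnSn m) @: J)) @: K).

Definition homotopic_on (R : realType) (X Y : topologicalType)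
    (A : set X) (B : set Y) (f g : X -> Y) : Prop :=
  exists H : R * X -> Y,
    {within [set t : R | 0 <= t <= 1] `*` A, continuous H} /\
    (forall t x, 0 <= t <= 1 -> A x -> B (H (t, x))) /\
    (forall x, A x -> H (0, x) = f x) /\
    (forall x, A x -> H (1, x) = g x).

Definition homotopy_equivalent (R : realType) (X Y : topologicalType)
    (A : set X) (B : set Y) : Prop :=
  exists (f : X -> Y) (g : Y -> X),
    {within A, continuous f} /\ (forall x, A x -> B (f x)) /\
    {within B, continuous g} /\ (forall y, B y -> A (g y)) /\
    homotopic_on R A A (g \o f) id /\ homotopic_on R B B (f \o g) id.

(* The map g z = (z_i - z_{m+1})_{i <= m} pulls U(K) back exactly to D(L):
   the non-faces of L are the cones I + {m+1} over the non-faces I of K, and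
   z lies in D_{I + {m+1}} iff g z lies in C_I.  The fibres of g are the lines
   parallel to the diagonal (1,...,1), so extension by zero is a homotopy
   inverse, the homotopy z - (1 - t) z_{m+1} (1,...,1) sliding along them.
   The argument works over any numeric field and for any family K. *)
From HB Require Import structures.
From mathcomp Require Import all_boot all_algebra ring.
From mathcomp Require Import all_classical all_reals all_analysis.
From mathcomp.real_closed Require Import complex.
Import numFieldNormedType.Exports.
Import GRing.Theory Num.Theory.

Set Implicit Arguments.
Unset Strict Implicit.
Unset Printing Implicit Defensive.

Local Open Scope ring_scope.
Local Open Scope classical_set_scope.

Lemma continuous_mx (X T : topologicalType) m n (f : X -> 'M[T]_(m, n)) :
  (forall i j, continuous (fun x => f x i j)) -> continuous f.
Proof.
move=> f_cont x A [P Pnbhs sPA].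
have : \forall y \near x, forall ij : 'I_m * 'I_n, P ij.1 ij.2 (f y ij.1 ij.2).
  by apply: filter_forall => ij; apply: f_cont; exact: Pnbhs.
by apply: filterS => y Py; apply: sPA => i j; exact: (Py (i, j)).
Qed.

Lemma continuous_row (X T : topologicalType) n (h : X -> 'I_n -> T) :
  (forall i, continuous (h^~ i)) -> continuous (fun x => \row_i h x i).
Proof.
move=> h_cont; apply: continuous_mx => i j.
by rewrite (_ : (fun x => _) = h^~ j) //; apply/funext => x; rewrite mxE.
Qed.

Section Cone.
Variable m : nat.

Definition cone_set (J : {set 'I_m}) : {set 'I_m.+1} :=
  ord_max |: (widen_ord (leqnSn m) @: J).

Definition apex_base (I : {set 'I_m.+1}) : {set 'I_m} := lift ord_max @^-1: I.

Lemma widen_ord_lift (j : 'I_m) : widen_ord (leqnSn m) j = lift ord_max j.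
Proof. by apply: val_inj; rewrite /= /bump leqNgt ltn_ord. Qed.

Lemma mem_lift_cone_set (J : {set 'I_m}) (j : 'I_m) :
  (lift ord_max j \in cone_set J) = (j \in J).
Proof.
rewrite /cone_set (eq_imset _ widen_ord_lift) in_setU1 eq_sym.
by rewrite (negbTE (neq_lift _ _)) mem_imset //; exact: lift_inj.
Qed.

Lemma apex_base_cone (J : {set 'I_m}) : apex_base (cone_set J) = J.
Proof. by apply/setP => j; rewrite inE mem_lift_cone_set. Qed.

Lemma cone_apex_base (I : {set 'I_m.+1}) :
  ord_max \in I -> cone_set (apex_base I) = I.
Proof.
move=> maxI; apply/setP => i; case: (unliftP ord_max i) => [j ->|->].
  by rewrite mem_lift_cone_set inE.
by rewrite setU11 maxI.
Qed.

Lemma in_cone_complex (K : {set {set 'I_m}}) (I : {set 'I_m.+1}) :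
  (I \in cone_complex K) = (ord_max \notin I) || (apex_base I \in K).
Proof.
rewrite /cone_complex -/cone_set !inE /=; case: (boolP (ord_max \in I)) => //= maxI.
apply/imsetP/idP => [[J JK ->]|IK]; first by rewrite apex_base_cone.
by exists (apex_base I); rewrite ?cone_apex_base.
Qed.

End Cone.

Section ApexCoordinates.
Variables (F : numFieldType) (m : nat).
Implicit Types (z : 'rV[F]_m.+1) (w : 'rV[F]_m).

Definition sub_apex z : 'rV[F]_m :=
  \row_i (z ord0 (lift ord_max i) - z ord0 ord_max).

Definition extend0 w : 'rV[F]_m.+1 :=
  \row_i oapp (w ord0) 0 (unlift ord_max i).

Lemma sub_apex_extend0 w : sub_apex (extend0 w) = w.
Proof. by apply/rowP => j; rewrite !mxE liftK unlift_none subr0. Qed.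

Lemma sub_apex_shift z (c : F) : sub_apex (z - c *: const_mx 1) = sub_apex z.
Proof. by apply/rowP => j; rewrite !mxE; ring. Qed.

Lemma extend0_sub_apex z :
  extend0 (sub_apex z) = z - z ord0 ord_max *: const_mx 1.
Proof.
apply/rowP => i; rewrite !mxE mulr1; case: (unliftP ord_max i) => [j ->|->] /=.
  by rewrite mxE.
by rewrite subrr.
Qed.

Lemma diagD_apex z (I : {set 'I_m.+1}) : ord_max \in I ->
  diagD I z <-> coordC (apex_base I) (sub_apex z).
Proof.
move=> maxI; split=> [zI j | zI i i' iI i'I].
  by rewrite inE mxE => jI; apply/eqP; rewrite subr_eq0 (zI _ _ jI maxI).
suff apexI k : k \in I -> z ord0 k = z ord0 ord_max by rewrite !apexI.
case: (unliftP ord_max k) => [j -> jI|-> //].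
by have /(_ _)/eqP := zI j; rewrite inE mxE subr_eq0 => /(_ jI)/eqP.
Qed.

Lemma Dcompl_coneE (K : {set {set 'I_m}}) :
  Dcompl (cone_complex K) = sub_apex @^-1` Ucompl K.
Proof.
apply/seteqP; split=> z /= zD I.
  move=> IK; rewrite -(apex_base_cone I) -diagD_apex ?setU11 //; apply: zD.
  by rewrite in_cone_complex setU11 apex_base_cone.
rewrite in_cone_complex negb_or negbK => /andP[maxI IK].
by rewrite diagD_apex //; exact: zD.
Qed.

Lemma sub_apex_continuous : continuous sub_apex.
Proof.
apply: continuous_row => i z.
by apply: continuousB; exact: coord_continuous.
Qed.

Lemma extend0_continuous : continuous extend0.
Proof.
apply: continuous_row => i; case: (unlift ord_max i) => [j|] /=.
  exact: coord_continuous.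
exact: cst_continuous.
Qed.

End ApexCoordinates.

Lemma homotopic_on_id (R : realType) (X : topologicalType) (A : set X) :
  homotopic_on R A A id id.
Proof.
exists snd; split; first by apply: continuous_subspaceT => p; exact: cvg_snd.
by split=> [t x _ //|]; split.
Qed.

Section DiagonalHomotopy.
Variables (R : realType) (F : numFieldType) (phi : R -> F).
Hypotheses (phi_cont : continuous phi) (phi0 : phi 0 = 0) (phi1 : phi 1 = 1).
Variable m : nat.

Definition diagonal_homotopy (p : R * 'rV[F]_m.+1) : 'rV[F]_m.+1 :=
  p.2 - ((1 - phi p.1) * p.2 ord0 ord_max) *: const_mx 1.

Lemma diagonal_homotopy_continuous : continuous diagonal_homotopy.
Proof.
move=> p; apply: continuousB; first exact: cvg_snd.
apply: continuousZr_tmp; apply: continuousM.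
  apply: continuousB; first exact: cst_continuous.
  by apply: (@continuous_comp _ _ _ fst phi); [exact: cvg_fst | exact: phi_cont].
by apply: (@continuous_comp _ _ _ snd (fun z : 'rV[F]_m.+1 => z ord0 ord_max));
  [exact: cvg_snd | exact: coord_continuous].
Qed.

Lemma diagonal_homotopy0 z : diagonal_homotopy (0, z) = extend0 (sub_apex z).
Proof. by rewrite extend0_sub_apex /diagonal_homotopy /= phi0 subr0 mul1r. Qed.

Lemma diagonal_homotopy1 z : diagonal_homotopy (1, z) = z.
Proof. by rewrite /diagonal_homotopy /= phi1 subrr mul0r scale0r subr0. Qed.

Lemma homotopy_equivalent_Ucompl_Dcompl_cone (K : {set {set 'I_m}}) :
  homotopy_equivalent R (@Ucompl F m K) (@Dcompl F m.+1 (cone_complex K)).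
Proof.
rewrite Dcompl_coneE; exists (@extend0 F m), (@sub_apex F m).
split; first exact/continuous_subspaceT/extend0_continuous.
split; first by move=> w Kw; rewrite /= sub_apex_extend0.
split; first exact/continuous_subspaceT/sub_apex_continuous.
split=> //; split.
  rewrite (_ : _ \o _ = id); first exact: homotopic_on_id.
  exact/funext/sub_apex_extend0.
exists diagonal_homotopy.
split; first exact/continuous_subspaceT/diagonal_homotopy_continuous.
split; first by move=> t z _; rewrite /= sub_apex_shift.
by split=> z _; rewrite ?diagonal_homotopy0 ?diagonal_homotopy1.
Qed.

End DiagonalHomotopy.

Lemma normc_real (R : rcfType) (t : R) : `|t%:C|%C = (`|t|%:C)%C :> R[i].
Proof. by rewrite normc_def /= expr0n addr0 sqrtr_sqr. Qed.

Lemma complex_of_real_continuous (R : realType) :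
  continuous (fun t : R => (t%:C)%C : (R[i] : numClosedFieldType)).
Proof.
move=> t A /nbhs_ballP [e e0 eA]; apply/nbhs_ballP.
have : (0 : R[i]) < e := e0; rewrite ltcE /= => /andP [/eqP Ime Ree].
exists (complex.Re e) => // s; rewrite /ball /= => ts; apply: eA.
by rewrite /ball /= -rmorphB normc_real (complexE e) Ime mulr0 addr0 ltcR.
Qed.

Theorem theorem4p1 (R : realType) (m : nat) (K : {set {set 'I_m}}) :
  simplicial_complex K ->
  homotopy_equivalent R
    (@Ucompl (R[i] : numClosedFieldType) m K)
    (@Dcompl (R[i] : numClosedFieldType) m.+1 (cone_complex K)) /\
  homotopy_equivalent R (@Ucompl R m K) (@Dcompl R m.+1 (cone_complex K)).
Proof.
move=> _; split.
  apply: (@homotopy_equivalent_Ucompl_Dcompl_cone _ (R[i] : numClosedFieldType)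
    (fun t => (t%:C)%C)) => //; exact: complex_of_real_continuous.
by apply: (@homotopy_equivalent_Ucompl_Dcompl_cone _ R id) => // x.
Qed.
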